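(* Let $\Psi$ be the interaction on the CAR algebra $\mathcal A^{CAR}(\ell^2(\mathbb Z))$ defined by $\Psi(\{n,n+2l\})=-\frac{2i}{\pi}\,\frac{2l}{(2l)^2-1}\,(a^*_na_{n+2l}-a^*_{n+2l}a_n)$ for $n\in\mathbb Z$, $l\in\mathbb Z$, $l\ge1$, and $\Psi(X)=0$ for all other finite $X\subset\mathbb Z$. Then $\sum_{X\ni0}\Psi(X)$ converges in norm and $$\Big\|\sum_{X\ni0}\Psi(X)\Big\|\le 2\sqrt{1-\frac{4}{\pi^2}}.$$
   Context: $\mathcal A^{CAR}(\ell^2(\mathbb Z))$ is the CAR algebra generated by $a_n=a(e_n)$, $a_n^*=a^*(e_n)$, $n\in\mathbb Z$, where $\{e_n\}$ is the standard basis of $\ell^2(\mathbb Z)$, satisfying $\{a_n,a_m^*\}=\delta_{nm}I$, $\{a_n,a_m\}=0$. The sum $\sum_{X\ni 0}$ runs over all finite subsets $X\subset\mathbb Z$ containing $0$. *)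

From Stdlib Require Import Reals ZArith List Sorting.Sorted.
Open Scope R_scope.

Record C := mkC { Cre : R; Cim : R }.
Definition C0 : C := mkC 0 0.
Definition C1 : C := mkC 1 0.
Definition Cadd (x y : C) : C := mkC (Cre x + Cre y) (Cim x + Cim y).
Definition Cmul (x y : C) : C :=
  mkC (Cre x * Cre y - Cim x * Cim y) (Cre x * Cim y + Cim x * Cre y).
Definition Cconj (x : C) : C := mkC (Cre x) (- Cim x).
Definition Cmod (x : C) : R := sqrt (Cre x ^ 2 + Cim x ^ 2).

Record CStarAlg := {
  car :> Type;
  zero : car; one : car;
  add : car -> car -> car; opp : car -> car;
  mul : car -> car -> car;
  smul : C -> car -> car;
  star : car -> car;
  norm : car -> R;
  add_assoc : forall x y z, add x (add y z) = add (add x y) z;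
  add_comm : forall x y, add x y = add y x;
  add_zero : forall x, add x zero = x;
  add_opp : forall x, add x (opp x) = zero;
  smul_one : forall x, smul C1 x = x;
  smul_assoc : forall c d x, smul c (smul d x) = smul (Cmul c d) x;
  smul_addr : forall c x y, smul c (add x y) = add (smul c x) (smul c y);
  smul_addl : forall c d x, smul (Cadd c d) x = add (smul c x) (smul d x);
  mul_assoc : forall x y z, mul x (mul y z) = mul (mul x y) z;
  mul_addr : forall x y z, mul x (add y z) = add (mul x y) (mul x z);
  mul_addl : forall x y z, mul (add x y) z = add (mul x z) (mul y z);
  mul_onel : forall x, mul one x = x;
  mul_oner : forall x, mul x one = x;
  smul_mull : forall c x y, mul (smul c x) y = smul c (mul x y);
  smul_mulr : forall c x y, mul x (smul c y) = smul c (mul x y);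
  star_inv : forall x, star (star x) = x;
  star_add : forall x y, star (add x y) = add (star x) (star y);
  star_smul : forall c x, star (smul c x) = smul (Cconj c) (star x);
  star_mul : forall x y, star (mul x y) = mul (star y) (star x);
  norm_nonneg : forall x, 0 <= norm x;
  norm_eq0 : forall x, norm x = 0 -> x = zero;
  norm_triangle : forall x y, norm (add x y) <= norm x + norm y;
  norm_smul : forall c x, norm (smul c x) = Cmod c * norm x;
  norm_submul : forall x y, norm (mul x y) <= norm x * norm y;
  norm_cstar : forall x, norm (mul (star x) x) = norm x * norm x;
  complete : forall u : nat -> car,
    (forall eps, 0 < eps -> exists N, forall p q, (N <= p)%nat -> (N <= q)%nat ->
        norm (add (u p) (opp (u q))) < eps) ->
    exists l, forall eps, 0 < eps -> exists N, forall n, (N <= n)%nat ->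
        norm (add (u n) (opp l)) < eps
}.

Arguments zero {_}. Arguments one {_}. Arguments add {_}. Arguments opp {_}.
Arguments mul {_}. Arguments smul {_}. Arguments star {_}. Arguments norm {_}.

Definition CAR_relations (A : CStarAlg) (a : Z -> A) : Prop :=
  (forall n m : Z, add (mul (a n) (star (a m))) (mul (star (a m)) (a n))
                   = if Z.eqb n m then one else zero) /\
  (forall n m : Z, add (mul (a n) (a m)) (mul (a m) (a n)) = zero).

(** Finite subsets of Z are represented canonically by strictly increasing
    lists of integers. *)
Definition finZset (X : list Z) : Prop := Sorted Z.lt X.

Definition Psi (A : CStarAlg) (a : Z -> A) (X : list Z) : A :=
  match X with
  | n :: m :: nil =>
      if (Z.even (m - n) && (0 <? m - n)%Z)%bool then
        let k := IZR (m - n) in  (* k = 2l *)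
        smul (mkC 0 (- (2 / PI) * (k / (k ^ 2 - 1))))
             (add (mul (star (a n)) (a m)) (opp (mul (star (a m)) (a n))))
      else zero
  | _ => zero
  end.

Definition admissible (F : list (list Z)) : Prop :=
  NoDup F /\ Forall (fun X => finZset X /\ In 0%Z X) F.

Definition sumPsi (A : CStarAlg) (a : Z -> A) (F : list (list Z)) : A :=
  fold_right (fun X acc => add (Psi A a X) acc) zero F.

(** Norm convergence of the (unordered) sum over X \ni 0 to S: the net of
    finite partial sums indexed by finite families of sets X \ni 0. *)
Definition sum_X_ni_0_converges_to (A : CStarAlg) (a : Z -> A) (S : A) : Prop :=
  forall eps, 0 < eps -> exists F0, admissible F0 /\
    forall F, admissible F -> incl F0 F ->
      norm (add (sumPsi A a F) (opp S)) < eps.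

From Pilot Require Import Defs.
From Stdlib Require Import Reals ZArith List Lra Lia Permutation.
Import ListNotations.
Open Scope R_scope.

(** Write [L B := i (a_0^* B - B^* a_0)] and [t_k := -(2/pi) k/(k^2-1)].  Every
    non-zero term [Psi(X)] with [0 \in X] is [L (t_k a_k)], where [k <> 0] is the
    even "partner" of [0] in [X]; so a finite partial sum over a family [F] equals
    [L (B_K)] with [B_K := sum_(k in K) t_k a_k], [K] the set of partners in [F].
    1. C*-algebra: if [{B,B} = 0] and [{B^*,B} = s 1] then [||B||^2 <= s]; by the
       CAR relations this gives [||B_K||^2 <= sum_(k in K) t_k^2] for any finite
       set [K], and [||L B|| <= 2 ||B||] because [||a_0|| <= 1].
    2. Numerics: [sum_(0 < |k| <= 2n, k even) t_k^2 <= 1 - 4/pi^2] (a telescoping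
       estimate after the first term), and [sum_(|k| > m) t_k^2 <= 2/m].
    3. Hence the partial sums [u_n := L (B_(evens n))] form a Cauchy sequence of
       norm [<= 2 sqrt(1 - 4/pi^2)]; its limit [S] (completeness) is the limit of
       the net of partial sums over admissible families, since any family
       containing the sets [{0, +-2j}], [j <= N], differs from [u_N] by a tail. *)

Arguments add_assoc {_}.   Arguments add_comm {_}.    Arguments add_zero {_}.
Arguments add_opp {_}.     Arguments smul_one {_}.    Arguments smul_assoc {_}.
Arguments smul_addr {_}.   Arguments smul_addl {_}.   Arguments mul_assoc {_}.
Arguments mul_addr {_}.    Arguments mul_addl {_}.    Arguments mul_onel {_}.
Arguments smul_mull {_}.   Arguments smul_mulr {_}.   Arguments star_inv {_}.
Arguments star_add {_}.    Arguments star_smul {_}.   Arguments star_mul {_}.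
Arguments norm_nonneg {_}. Arguments norm_triangle {_}. Arguments norm_smul {_}.
Arguments norm_submul {_}. Arguments norm_cstar {_}.

Definition rc (r : R) : Defs.C := mkC r 0.
Definition Ci : Defs.C := mkC 0 1.

Lemma Cconj_rc (r : R) : Cconj (rc r) = rc r.
Proof. unfold Cconj, rc; simpl. rewrite Ropp_0. reflexivity. Qed.

Lemma Cmod_rc (r : R) : Cmod (rc r) = Rabs r.
Proof. unfold Cmod, rc; simpl. rewrite <- sqrt_Rsqr_abs. f_equal. unfold Rsqr. ring. Qed.

Lemma Cmod_Ci : Cmod Ci = 1.
Proof. unfold Cmod, Ci; cbn [Cre Cim]. replace (0 ^ 2 + 1 ^ 2) with 1 by ring. apply sqrt_1. Qed.

Section CStarFacts.
Variable A : CStarAlg.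

Definition sub (x y : A) : A := add x (opp y).
Definition ac (x y : A) : A := add (mul x y) (mul y x).

Lemma add_0_l (x : A) : add zero x = x.
Proof. rewrite add_comm; apply add_zero. Qed.

Lemma add_cancel_l (x y z : A) : add x y = add x z -> y = z.
Proof.
  intro H.
  assert (E : add (opp x) (add x y) = add (opp x) (add x z)) by (rewrite H; reflexivity).
  rewrite !add_assoc, (add_comm (opp x) x), add_opp, !add_0_l in E. exact E.
Qed.

Lemma opp_unique (x y : A) : add x y = zero -> y = opp x.
Proof. intro H. apply (add_cancel_l x). rewrite H, add_opp. reflexivity. Qed.

Lemma opp_opp (x : A) : opp (opp x) = x.
Proof. symmetry. apply opp_unique. rewrite add_comm. apply add_opp. Qed.

Lemma opp_zero : opp (zero : A) = zero.
Proof. symmetry. apply opp_unique. apply add_zero. Qed.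

Lemma add_swap4 (p q r s : A) : add (add p q) (add r s) = add (add p r) (add q s).
Proof. rewrite !add_assoc. f_equal. rewrite <- !add_assoc. f_equal. apply add_comm. Qed.

Lemma opp_add (x y : A) : opp (add x y) = add (opp x) (opp y).
Proof. symmetry. apply opp_unique. rewrite add_swap4, !add_opp. apply add_zero. Qed.

Lemma opp_sub (x y : A) : opp (sub x y) = sub y x.
Proof. unfold sub. rewrite opp_add, opp_opp. apply add_comm. Qed.

Lemma add_sub_cancel (x y : A) : sub (add x y) x = y.
Proof. unfold sub. rewrite (add_comm x y), <- add_assoc, add_opp. apply add_zero. Qed.

Lemma sub_sub_cancel (x y : A) : sub y (sub y x) = x.
Proof.
  unfold sub at 1. rewrite opp_sub, add_comm. unfold sub.
  rewrite <- add_assoc, (add_comm (opp y) y), add_opp. apply add_zero.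
Qed.

Lemma sub_add_sub (x y z : A) : add (sub x y) (sub y z) = sub x z.
Proof.
  unfold sub. rewrite <- add_assoc. f_equal.
  rewrite add_assoc, (add_comm (opp y) y), add_opp. apply add_0_l.
Qed.

(** An element equal to its double is zero: the usual way to see that
    bilinear or antilinear operations vanish at zero. *)
Lemma double_eq_self (x : A) : add x x = x -> x = zero.
Proof. intro H. apply (add_cancel_l x). rewrite H, add_zero. reflexivity. Qed.

Lemma smul_zero (c : Defs.C) : smul c (zero : A) = zero.
Proof. apply double_eq_self. rewrite <- smul_addr, add_zero. reflexivity. Qed.

Lemma smul_C0 (x : A) : smul (mkC 0 0) x = zero.
Proof.
  apply double_eq_self. rewrite <- smul_addl. unfold Cadd; simpl. rewrite Rplus_0_l. reflexivity.
Qed.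

Lemma smul_opp (c : Defs.C) (x : A) : smul c (opp x) = opp (smul c x).
Proof. apply opp_unique. rewrite <- smul_addr, add_opp. apply smul_zero. Qed.

Lemma opp_smul (x : A) : opp x = smul (rc (-1)) x.
Proof.
  symmetry; apply opp_unique. rewrite <- (smul_one x) at 1. rewrite <- smul_addl.
  unfold Cadd, C1, rc; simpl. replace (1 + -1) with 0 by ring. rewrite Rplus_0_l. apply smul_C0.
Qed.

Lemma smul_rc_add (r s : R) (x : A) : add (smul (rc r) x) (smul (rc s) x) = smul (rc (r + s)) x.
Proof. rewrite <- smul_addl. unfold Cadd, rc; simpl. rewrite Rplus_0_l. reflexivity. Qed.

Lemma smul_rc_mul (r s : R) (x : A) : smul (rc r) (smul (rc s) x) = smul (rc (r * s)) x.
Proof. rewrite smul_assoc. unfold Cmul, rc; simpl. f_equal. f_equal; ring. Qed.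

Lemma mul_zero_l (x : A) : mul zero x = zero.
Proof. apply double_eq_self. rewrite <- mul_addl, add_zero. reflexivity. Qed.

Lemma mul_zero_r (x : A) : mul x zero = zero.
Proof. apply double_eq_self. rewrite <- mul_addr, add_zero. reflexivity. Qed.

Lemma mul_opp_l (x y : A) : mul (opp x) y = opp (mul x y).
Proof. apply opp_unique. rewrite <- mul_addl, add_opp. apply mul_zero_l. Qed.

Lemma mul_opp_r (x y : A) : mul x (opp y) = opp (mul x y).
Proof. apply opp_unique. rewrite <- mul_addr, add_opp. apply mul_zero_r. Qed.

Lemma star_zero : star (zero : A) = zero.
Proof. apply double_eq_self. rewrite <- star_add, add_zero. reflexivity. Qed.

Lemma ac_comm (x y : A) : ac x y = ac y x.
Proof. apply add_comm. Qed.

Lemma ac_add_l (x y z : A) : ac (add x y) z = add (ac x z) (ac y z).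
Proof. unfold ac. rewrite mul_addl, mul_addr. apply add_swap4. Qed.

Lemma ac_add_r (x y z : A) : ac z (add x y) = add (ac z x) (ac z y).
Proof. rewrite !(ac_comm z). apply ac_add_l. Qed.

Lemma ac_smul_l (c : Defs.C) (x y : A) : ac (smul c x) y = smul c (ac x y).
Proof. unfold ac. rewrite smul_mull, smul_mulr, smul_addr. reflexivity. Qed.

Lemma ac_smul_r (c : Defs.C) (x y : A) : ac x (smul c y) = smul c (ac x y).
Proof. rewrite !(ac_comm x). apply ac_smul_l. Qed.

Lemma ac_zero_l (x : A) : ac zero x = zero.
Proof. unfold ac. rewrite mul_zero_l, mul_zero_r. apply add_zero. Qed.

Lemma star_ac (x y : A) : star (ac x y) = ac (star x) (star y).
Proof. unfold ac. rewrite star_add, !star_mul. apply add_comm. Qed.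

(** [{x, x} = 2 x^2], so a self-anticommuting element squares to zero. *)
Lemma sq_zero_of_ac (x : A) : ac x x = zero -> mul x x = zero.
Proof.
  unfold ac. intro H.
  rewrite <- (smul_one (mul x x)). change Defs.C1 with (rc 1).
  replace 1 with (/2 + /2) by field.
  rewrite <- smul_rc_add, <- smul_addr, H. apply smul_zero.
Qed.

Lemma norm_smul_rc (r : R) (x : A) : norm (smul (rc r) x) = Rabs r * norm x.
Proof. rewrite norm_smul, Cmod_rc. reflexivity. Qed.

Lemma norm_opp (x : A) : norm (opp x) = norm x.
Proof. rewrite opp_smul, norm_smul_rc, Rabs_left by lra. ring. Qed.

Lemma norm_sub_sym (x y : A) : norm (sub x y) = norm (sub y x).
Proof. rewrite <- opp_sub. apply norm_opp. Qed.

Lemma norm_sub_le (x y : A) : norm (sub x y) <= norm x + norm y.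
Proof. unfold sub. rewrite <- (norm_opp y). apply norm_triangle. Qed.

Lemma norm_sub_tri (x y z : A) : norm (sub x z) <= norm (sub x y) + norm (sub y z).
Proof. rewrite <- (sub_add_sub x y z). apply norm_triangle. Qed.

(** The C*-identity forces [||x^*|| = ||x||]. *)
Lemma norm_star_le (x : A) : norm x <= norm (star x).
Proof.
  destruct (Req_dec (norm x) 0) as [H|H].
  - rewrite H. apply norm_nonneg.
  - pose proof (norm_cstar x) as E. pose proof (norm_submul (star x) x) as Hm.
    pose proof (norm_nonneg x). rewrite E in Hm.
    apply Rmult_le_reg_r with (norm x); lra.
Qed.

Lemma norm_star (x : A) : norm (star x) = norm x.
Proof.
  apply Rle_antisym.
  - rewrite <- (star_inv x) at 2. apply norm_star_le.
  - apply norm_star_le.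
Qed.

Lemma norm_le_sqrt (x : A) (s : R) : norm x * norm x <= s -> norm x <= sqrt s.
Proof.
  intro H. rewrite <- (sqrt_square (norm x)) by apply norm_nonneg. apply sqrt_le_1_alt. exact H.
Qed.

(** Key C*-estimate: if [{B,B} = 0] and [{B^*,B} = s 1] then [P := B^* B]
    satisfies [P^2 = s P], whence [||B||^4 = ||P||^2 = s ||P|| = s ||B||^2]. *)
Lemma norm_sq_le_of_anticomm (B : A) (s : R) : 0 <= s ->
  ac B B = zero -> ac (star B) B = smul (rc s) one -> norm B * norm B <= s.
Proof.
  intros Hs HBB HBsB.
  set (P := mul (star B) B).
  assert (HBBs : mul B (star B) = sub (smul (rc s) one) P).
  { apply (add_cancel_l P). rewrite <- HBsB. unfold ac. fold P.
    rewrite add_sub_cancel. reflexivity. }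
  assert (HP : mul P P = smul (rc s) P).
  { unfold P. rewrite <- !mul_assoc, (mul_assoc B (star B) B), HBBs. unfold sub.
    rewrite mul_addl, mul_opp_l, smul_mull, mul_onel, mul_addr, mul_opp_r, smul_mulr.
    unfold P. rewrite <- (mul_assoc (star B) B B), (sq_zero_of_ac B HBB).
    rewrite !mul_zero_r, opp_zero, add_zero. reflexivity. }
  assert (NP : norm P = norm B * norm B) by apply norm_cstar.
  assert (NPP : norm (mul P P) = norm P * norm P).
  { replace (mul P P) with (mul (star P) P) by (unfold P; rewrite star_mul, star_inv; reflexivity).
    apply norm_cstar. }
  rewrite HP, norm_smul_rc, Rabs_pos_eq in NPP by exact Hs.
  pose proof (norm_nonneg B).
  destruct (Req_dec (norm P) 0) as [Z|Z].
  - rewrite <- NP, Z. exact Hs.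
  - assert (s = norm P) by (apply Rmult_eq_reg_r with (norm P); lra). lra.
Qed.

Definition seq_limit (u : nat -> A) (l : A) : Prop :=
  forall eps, 0 < eps -> exists N, forall n, (N <= n)%nat -> norm (add (u n) (opp l)) < eps.

Lemma norm_limit_le (u : nat -> A) (l : A) (c : R) :
  seq_limit u l -> (forall n, norm (u n) <= c) -> norm l <= c.
Proof.
  intros Hl Hc. destruct (Rle_or_lt (norm l) c) as [L|L]; auto. exfalso.
  destruct (Hl (norm l - c) ltac:(lra)) as [N HN]. specialize (HN N (le_n _)).
  pose proof (norm_sub_le (u N) (sub (u N) l)) as Htri.
  rewrite sub_sub_cancel in Htri.
  pose proof (Hc N). fold (sub (u N) l) in HN. lra.
Qed.

End CStarFacts.

Definition sumR (g : Z -> R) (l : list Z) : R := fold_right (fun k acc => g k + acc) 0 l.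
Definition sqsum (K : list Z) (f : Z -> R) : R := sumR (fun k => f k * f k) K.

Definition mem (k : Z) (l : list Z) : bool := existsb (Z.eqb k) l.
Definition list_minus (K E : list Z) : list Z := filter (fun k => negb (mem k E)) K.

Lemma mem_spec k l : mem k l = true <-> In k l.
Proof.
  unfold mem. rewrite existsb_exists. split.
  - intros [x [Hx E]]. apply Z.eqb_eq in E. subst; auto.
  - intro H. exists k. split; auto. apply Z.eqb_refl.
Qed.

Lemma In_list_minus K E k : In k (list_minus K E) <-> In k K /\ ~ In k E.
Proof.
  unfold list_minus. rewrite filter_In, <- (mem_spec k E).
  destruct (mem k E); simpl; split; intros [H1 H2]; split; auto; congruence.
Qed.

Lemma sqsum_nonneg K f : 0 <= sqsum K f.
Proof. induction K as [|k K IH]; simpl. lra. pose proof (Rle_0_sqr (f k)). unfold Rsqr in *. lra. Qed.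

Section CARCombinations.
Variable A : CStarAlg.
Variable a : Z -> A.

Definition lincomb (K : list Z) (f : Z -> R) : A :=
  fold_right (fun k acc => add (smul (rc (f k)) (a k)) acc) zero K.

Lemma lincomb_app l1 l2 f : lincomb (l1 ++ l2) f = add (lincomb l1 f) (lincomb l2 f).
Proof.
  induction l1 as [|k l1 IH]; simpl; [symmetry; apply add_0_l|].
  rewrite IH, add_assoc. reflexivity.
Qed.

Lemma lincomb_filter (p : Z -> bool) K f :
  lincomb K f = add (lincomb (filter p K) f) (lincomb (filter (fun k => negb (p k)) K) f).
Proof.
  induction K as [|k K IH]; simpl. symmetry; apply add_zero.
  destruct (p k); simpl; rewrite IH.
  - apply add_assoc.
  - rewrite !add_assoc. f_equal. apply add_comm.
Qed.

Lemma lincomb_perm K K' f : Permutation K K' -> lincomb K f = lincomb K' f.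
Proof.
  induction 1; simpl; try congruence.
  rewrite !add_assoc. f_equal. apply add_comm.
Qed.

Lemma lincomb_split K E f : NoDup K -> NoDup E -> incl E K ->
  lincomb K f = add (lincomb E f) (lincomb (list_minus K E) f).
Proof.
  intros NK NE HEK. rewrite (lincomb_filter (fun k => mem k E) K). f_equal.
  apply lincomb_perm, NoDup_Permutation; [apply NoDup_filter; exact NK|exact NE|].
  intro k. rewrite filter_In, mem_spec. split; [tauto|]. intro Hk. split; auto.
Qed.

Hypothesis hCAR : CAR_relations A a.

Lemma car_ac_star n m : ac A (a n) (star (a m)) = if Z.eqb n m then one else zero.
Proof. apply (proj1 hCAR). Qed.

Lemma car_ac n m : ac A (a n) (a m) = zero.
Proof. apply (proj2 hCAR). Qed.

Lemma lincomb_ac_star k K f : ~ In k K -> ac A (lincomb K f) (star (a k)) = zero.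
Proof.
  induction K as [|j K IH]; intro H; simpl.
  - apply ac_zero_l.
  - rewrite ac_add_l, ac_smul_l, car_ac_star. destruct (Z.eqb_spec j k) as [E|E].
    + exfalso. apply H. left. exact E.
    + rewrite smul_zero, IH by (intro; apply H; right; assumption). apply add_zero.
Qed.

Lemma lincomb_ac k K f : ac A (lincomb K f) (a k) = zero.
Proof.
  induction K as [|j K IH]; simpl.
  - apply ac_zero_l.
  - rewrite ac_add_l, ac_smul_l, car_ac, smul_zero, IH. apply add_zero.
Qed.

Lemma lincomb_anticomm K f : NoDup K ->
  ac A (lincomb K f) (lincomb K f) = zero /\
  ac A (star (lincomb K f)) (lincomb K f) = smul (rc (sqsum K f)) one.
Proof.
  induction 1 as [|k K Hk HK [IH1 IH2]]; simpl.
  - rewrite star_zero, ac_zero_l. split; [reflexivity|]. symmetry. apply smul_C0.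
  - set (c := lincomb K f) in *. set (u := smul (rc (f k)) (a k)).
    assert (Hck : ac A c (a k) = zero) by apply lincomb_ac.
    assert (Hcks : ac A c (star (a k)) = zero) by (apply lincomb_ac_star; exact Hk).
    assert (Huu : ac A u u = zero)
      by (unfold u; rewrite ac_smul_l, ac_smul_r, car_ac, !smul_zero; reflexivity).
    assert (Hcu : ac A c u = zero) by (unfold u; rewrite ac_smul_r, Hck; apply smul_zero).
    assert (Huc : ac A u c = zero) by (rewrite ac_comm; exact Hcu).
    split.
    + rewrite ac_add_l, !ac_add_r, Huu, Huc, Hcu, IH1, !add_zero. reflexivity.
    + assert (Hus : star u = smul (rc (f k)) (star (a k)))
        by (unfold u; rewrite star_smul, Cconj_rc; reflexivity).
      assert (Hcsk : ac A (star c) (a k) = zero)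
        by (rewrite <- (star_inv (a k)), <- star_ac, Hcks; apply star_zero).
      rewrite star_add, Hus, ac_add_l, !ac_add_r, IH2.
      unfold u. rewrite !ac_smul_l, !ac_smul_r.
      rewrite (ac_comm A (star (a k)) (a k)), car_ac_star, Z.eqb_refl.
      rewrite (ac_comm A (star (a k)) c), Hcks, Hcsk, !smul_zero, add_zero, add_0_l.
      rewrite smul_rc_mul, smul_rc_add. reflexivity.
Qed.

Lemma norm_lincomb K f : NoDup K -> norm (lincomb K f) * norm (lincomb K f) <= sqsum K f.
Proof.
  intro HK. destruct (lincomb_anticomm K f HK).
  apply norm_sq_le_of_anticomm; auto. apply sqsum_nonneg.
Qed.

Lemma norm_a_le1 n : norm (a n) <= 1.
Proof.
  pose proof (norm_lincomb [n] (fun _ => 1) (NoDup_cons n (@in_nil _ n) (NoDup_nil _))) as H.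
  unfold sqsum in H. simpl in H. change (rc 1) with Defs.C1 in H. rewrite smul_one, add_zero in H.
  pose proof (norm_nonneg (a n)). nra.
Qed.

(** The map [L B = i (a_0^* B - B^* a_0)]: each [Psi(X)] with [0 \in X] is an
    image [L (t_k a_k)]. It is additive and [||L B|| <= 2 ||B||]. *)
Definition L0 (B : A) : A := smul Ci (sub A (mul (star (a 0%Z)) B) (mul (star B) (a 0%Z))).

Lemma L0_zero : L0 zero = zero.
Proof.
  unfold L0. rewrite star_zero, mul_zero_r, mul_zero_l. unfold sub.
  rewrite opp_zero, add_zero. apply smul_zero.
Qed.

Lemma L0_add x y : L0 (add x y) = add (L0 x) (L0 y).
Proof.
  unfold L0, sub. rewrite star_add, mul_addr, mul_addl, opp_add, add_swap4, smul_addr. reflexivity.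
Qed.

Lemma norm_L0 B : norm (L0 B) <= 2 * norm B.
Proof.
  unfold L0. rewrite norm_smul, Cmod_Ci, Rmult_1_l.
  eapply Rle_trans. apply norm_sub_le.
  pose proof (norm_submul (star (a 0%Z)) B). pose proof (norm_submul (star B) (a 0%Z)).
  rewrite !norm_star in *. pose proof (norm_a_le1 0). pose proof (norm_nonneg B).
  pose proof (norm_nonneg (a 0%Z)). nra.
Qed.

Lemma norm_L0_lincomb K f : NoDup K -> norm (L0 (lincomb K f)) <= 2 * sqrt (sqsum K f).
Proof.
  intro HK. eapply Rle_trans. apply norm_L0.
  apply Rmult_le_compat_l. lra. apply norm_le_sqrt, norm_lincomb, HK.
Qed.

End CARCombinations.

(** The coefficient [t_k = -(2/pi) k/(k^2-1)], so that
    [Psi({n, n+k}) = i t_k (a_n^* a_(n+k) - a_(n+k)^* a_n)] for even [k > 0]. *)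
Definition coef (k : Z) : R := -(2/PI)*(IZR k/(IZR k ^2 - 1)).

Lemma coef_opp k : coef (- k) = - coef k.
Proof.
  unfold coef. rewrite opp_IZR. replace ((- IZR k) ^ 2) with (IZR k ^ 2) by ring.
  unfold Rdiv. ring.
Qed.

(** The partner of [0] in a set [X] carrying a non-zero term of [Psi]:
    [key X = [k]] if [X = {0, k}] or [X = {k, 0}] with [k] even, else [[]]. *)
Definition key (X : list Z) : list Z :=
  match X with
  | n :: m :: nil =>
      if (Z.even (m - n) && (0 <? m - n)%Z)%bool then
        (if Z.eqb n 0 then [m] else [n]) else []
  | _ => []
  end.

Definition keys (F : list (list Z)) : list Z := flat_map key F.

Definition keyset (K : list Z) : Prop :=
  NoDup K /\ forall k, In k K -> Z.even k = true /\ k <> 0%Z.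

Section PsiAsL0.
Variable A : CStarAlg.
Variable a : Z -> A.

Lemma L0_single k : L0 A a (lincomb A a [k] coef) =
  smul (mkC 0 (coef k)) (sub A (mul (star (a 0%Z)) (a k)) (mul (star (a k)) (a 0%Z))).
Proof.
  unfold L0; simpl. rewrite add_zero, star_smul, Cconj_rc, smul_mull, smul_mulr.
  unfold sub. rewrite <- smul_opp, <- smul_addr, smul_assoc. f_equal.
  unfold Cmul, Ci, rc; simpl. f_equal; ring.
Qed.

Lemma Psi_key X : In 0%Z X -> Psi A a X = L0 A a (lincomb A a (key X) coef).
Proof.
  intro H0.
  destruct X as [|n [|m [|p X]]]; simpl; try (symmetry; apply L0_zero).
  destruct (Z.even (m - n) && (0 <? m - n)%Z)%bool; [|symmetry; apply L0_zero].
  destruct (Z.eqb_spec n 0) as [Hn|Hn].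
  - subst n. rewrite L0_single, Z.sub_0_r. reflexivity.
  - assert (m = 0%Z) by (destruct H0 as [H0|[H0|[]]]; [congruence|auto]). subst m.
    rewrite L0_single, Z.sub_0_l, opp_IZR.
    replace (- IZR n * (- IZR n * 1)) with (IZR n ^ 2) by ring.
    replace (- (2 / PI) * (- IZR n / (IZR n ^ 2 - 1))) with (- coef n) by (unfold coef, Rdiv; ring).
    assert (Hneg : forall v (x : A), smul (mkC 0 (- v)) x = smul (mkC 0 v) (opp x)).
    { intros v x. rewrite opp_smul, smul_assoc. unfold Cmul, rc; simpl. f_equal. f_equal; ring. }
    rewrite Hneg. f_equal. unfold sub. rewrite opp_add, opp_opp. apply add_comm.
Qed.

Lemma sumPsi_keys F : Forall (fun X => In 0%Z X) F ->
  sumPsi A a F = L0 A a (lincomb A a (keys F) coef).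
Proof.
  induction 1 as [|X F HX HF IH]; simpl.
  - symmetry. apply L0_zero.
  - unfold keys in *. simpl. rewrite lincomb_app, L0_add, <- IH, Psi_key by exact HX. reflexivity.
Qed.

End PsiAsL0.

Lemma key_shape X : In 0%Z X -> key X = [] \/
  exists k, key X = [k] /\ X = (if (0 <? k)%Z then [0%Z; k] else [k; 0%Z]) /\
            Z.even k = true /\ k <> 0%Z.
Proof.
  intro H0. destruct X as [|n [|m [|p X]]]; simpl; auto.
  destruct (Z.even (m - n) && (0 <? m - n)%Z)%bool eqn:Ec; auto.
  apply andb_prop in Ec. destruct Ec as [E1 E2]. apply Z.ltb_lt in E2.
  right. destruct (Z.eqb_spec n 0) as [Hn|Hn].
  - subst n. exists m. rewrite Z.sub_0_r in E1.
    replace (0 <? m)%Z with true by (symmetry; apply Z.ltb_lt; lia).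
    repeat split; auto; lia.
  - assert (m = 0%Z) by (destruct H0 as [H0|[H0|[]]]; [congruence|auto]). subst m.
    exists n. replace (0 <? n)%Z with false by (symmetry; apply Z.ltb_ge; lia).
    repeat split; auto. replace n with (- (0 - n))%Z by lia. rewrite Z.even_opp. exact E1.
Qed.

(** Distinct sets have distinct partners, so an admissible family yields a keyset. *)
Lemma keys_keyset F : admissible F -> keyset (keys F).
Proof.
  intros [HN HF]. unfold keyset, keys. induction HN as [|X F HX HN IH]; simpl.
  - split. constructor. intros k [].
  - inversion HF as [|? ? [_ H0] HF']; subst. destruct (IH HF') as [IH1 IH2].
    destruct (key_shape X H0) as [E|[k [E [EX [Ek Hk]]]]]; rewrite E; simpl; [split; auto|].
    split.
    + constructor; auto. intro Hin. apply in_flat_map in Hin. destruct Hin as [Y [HY Hk']].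
      rewrite Forall_forall in HF'. destruct (HF' Y HY) as [_ HY0].
      destruct (key_shape Y HY0) as [E'|[k' [E' [EY _]]]]; rewrite E' in Hk'; [destruct Hk'|].
      destruct Hk' as [Hk'|[]]. subst k'. apply HX. rewrite EX, <- EY. exact HY.
    + intros k0 [H|H]; [subst|]; auto.
Qed.

Lemma keys_incl G F : incl G F -> incl (keys G) (keys F).
Proof.
  intros H k Hk. unfold keys in *. apply in_flat_map in Hk. destruct Hk as [X [HX Hk]].
  apply in_flat_map. exists X. auto.
Qed.

Fixpoint evens (n : nat) : list Z :=
  match n with
  | O => []
  | S p => (2 * Z.of_nat (S p))%Z :: (- (2 * Z.of_nat (S p)))%Z :: evens p
  end.

Lemma In_evens n k : In k (evens n) <-> (Z.even k = true /\ k <> 0%Z /\ (Z.abs k <= 2 * Z.of_nat n)%Z).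
Proof.
  rewrite Z.even_spec. induction n as [|n IH]; simpl.
  - split; [intros []|]. intros [_ [H1 H2]]. lia.
  - rewrite IH. split.
    + intros [H|[H|[[j Hj] [H1 H2]]]]; subst; repeat split; try lia.
      * exists (Z.of_nat (S n)); lia.
      * exists (- Z.of_nat (S n))%Z; lia.
      * exists j; lia.
    + intros [[j Hj] [H1 H2]]. subst k.
      destruct (Z.eq_dec (Z.abs (2*j)) (2 * Z.of_nat (S n))) as [E|E].
      * destruct (Z.abs_spec (2*j)) as [[_ F]|[_ F]]; rewrite F in E; [left|right;left]; lia.
      * right; right. split; [exists j; reflexivity|]. lia.
Qed.

Lemma evens_keyset n : keyset (evens n).
Proof.
  split; [|intros k Hk; apply In_evens in Hk; tauto].
  induction n as [|n IH]; simpl. constructor.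
  constructor.
  - intros [H|H]. lia. apply In_evens in H. lia.
  - constructor. intro H. apply In_evens in H. lia. exact IH.
Qed.

Lemma evens_incl N n : (N <= n)%nat -> incl (evens N) (evens n).
Proof.
  intros H k Hk. apply In_evens in Hk. apply In_evens.
  destruct Hk as (? & ? & ?). repeat split; auto; lia.
Qed.

Fixpoint pairs0 (n : nat) : list (list Z) :=
  match n with
  | O => []
  | S p => [0%Z; (2 * Z.of_nat (S p))%Z] :: [(- (2 * Z.of_nat (S p)))%Z; 0%Z] :: pairs0 p
  end.

Lemma In_pairs0 n X : In X (pairs0 n) -> exists j, (1 <= j <= Z.of_nat n)%Z /\
   (X = [0%Z; (2*j)%Z] \/ X = [(-(2*j))%Z; 0%Z]).
Proof.
  induction n as [|n IH]; simpl. intros [].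
  intros [H|[H|H]].
  - exists (Z.of_nat (S n)). split. lia. left; subst; reflexivity.
  - exists (Z.of_nat (S n)). split. lia. right; subst; reflexivity.
  - destruct (IH H) as [j [Hj HX]]. exists j. split. lia. exact HX.
Qed.

Lemma keys_pairs0 n : keys (pairs0 n) = evens n.
Proof. induction n as [|n IH]; simpl. reflexivity. unfold keys in *. simpl. rewrite IH. reflexivity. Qed.

Lemma admissible_pairs0 n : admissible (pairs0 n).
Proof.
  assert (Hpair : forall x1 x2 y1 y2 : Z, [x1;x2] = [y1;y2] -> x1 = y1 /\ x2 = y2)
    by (intros * H; injection H; auto).
  split.
  - induction n as [|n IH]; cbn [pairs0]. constructor.
    constructor; [|constructor; [|exact IH]].
    + intros [H|H]. apply Hpair in H; lia.
      apply In_pairs0 in H. destruct H as [j [Hj [H|H]]]; apply Hpair in H; lia.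
    + intro H. apply In_pairs0 in H. destruct H as [j [Hj [H|H]]]; apply Hpair in H; lia.
  - induction n as [|n IH]; simpl. constructor.
    constructor; [|constructor; [|exact IH]]; split; unfold finZset;
      try (repeat constructor; lia); simpl; auto.
Qed.

Lemma PI_gt3 : 3 < PI.
Proof. pose proof PI2_3_2. lra. Qed.

Lemma div_le x b y d : 0 < b -> 0 < d -> x * d <= y * b -> x / b <= y / d.
Proof.
  intros Hb Hd H.
  replace (x / b) with ((x * d) * / (b * d)) by (field; lra).
  replace (y / d) with ((y * b) * / (b * d)) by (field; lra).
  apply Rmult_le_compat_r; auto. left; apply Rinv_0_lt_compat; nra.
Qed.

Lemma coef_sq k : coef k * coef k =
  4 / (PI * PI) * (IZR k * IZR k / ((IZR k * IZR k - 1) * (IZR k * IZR k - 1))).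
Proof.
  pose proof PI_gt3. unfold coef. simpl. unfold Rdiv.
  replace (IZR k * (IZR k * 1)) with (IZR k * IZR k) by ring. rewrite !Rinv_mult. ring.
Qed.

Lemma sumR_le (f g : Z -> R) l : (forall k, In k l -> f k <= g k) -> sumR f l <= sumR g l.
Proof.
  induction l as [|k l IH]; simpl; intro H. lra.
  apply Rplus_le_compat; auto.
Qed.

Lemma sumR_incl (h : Z -> R) K K' : NoDup K -> NoDup K' -> incl K K' ->
  (forall k, In k K' -> 0 <= h k) -> sumR h K <= sumR h K'.
Proof.
  intro NK. revert K'. induction NK as [|k K Hk NK IH]; intros K' NK' HI Hpos; simpl.
  - induction K' as [|r K' IHK]; simpl. lra.
    assert (0 <= h r) by (apply Hpos; left; auto).
    assert (0 <= sumR h K')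
      by (apply IHK; [inversion NK'; auto|intros x []|intros; apply Hpos; right; auto]).
    lra.
  - assert (Hin : In k K') by (apply HI; left; auto).
    destruct (in_split _ _ Hin) as [K1 [K2 E]]. subst K'.
    assert (Hs : sumR h (K1 ++ k :: K2) = h k + sumR h (K1 ++ K2)).
    { clear. induction K1; simpl. reflexivity. rewrite IHK1. ring. }
    rewrite Hs. apply Rplus_le_compat_l. apply IH.
    + apply NoDup_remove_1 with k. exact NK'.
    + intros x Hx. assert (Hx' : In x (K1 ++ k :: K2)) by (apply HI; right; auto).
      apply in_app_iff in Hx'. apply in_app_iff. destruct Hx' as [H|[H|H]]; auto. subst; contradiction.
    + intros x Hx. apply Hpos. apply in_app_iff in Hx. apply in_app_iff. simpl. tauto.
Qed.

(** Tail estimate.  For [|k| >= 2], [t_k^2 <= 1/(|k|-1) - 1/|k|], a telescoping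
    majorant; summing it over the shell [m < |k| <= m + j] gives [<= 2/m]. *)
Definition tele (k : Z) : R := 1 / (IZR (Z.abs k) - 1) - 1 / IZR (Z.abs k).

Lemma coef_sq_le_tele k : (2 <= Z.abs k)%Z -> 0 <= tele k /\ coef k * coef k <= tele k.
Proof.
  intro Hk. pose proof PI_gt3.
  assert (HX : 2 <= IZR (Z.abs k)) by (apply IZR_le; exact Hk).
  set (X := IZR (Z.abs k)) in *.
  assert (EX : IZR k * IZR k = X * X).
  { unfold X. rewrite abs_IZR, <- Rabs_mult. symmetry. apply Rabs_pos_eq. nra. }
  assert (Eh : tele k = 1 / (X * (X - 1))) by (unfold tele; fold X; field; lra).
  rewrite Eh. split.
  - unfold Rdiv. rewrite Rmult_1_l. left. apply Rinv_0_lt_compat. nra.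
  - rewrite coef_sq, EX.
    assert (H1 : 4 / (PI * PI) <= 1 / 2) by (apply div_le; nra).
    assert (H3 : 3 <= X * X - 1) by nra.
    assert (H2 : X * X / ((X * X - 1) * (X * X - 1)) <= 2 / (X * (X - 1))).
    { apply div_le; [nra|nra|].
      assert (0 <= X * X * (X * X + X - 4) + 2) by (assert (0 <= X*X + X - 4) by nra; nra).
      nra. }
    replace (1 / (X * (X - 1))) with (1 / 2 * (2 / (X * (X - 1)))) by (field; lra).
    apply Rmult_le_compat; auto.
    + unfold Rdiv. apply Rmult_le_pos. lra. left; apply Rinv_0_lt_compat; nra.
    + unfold Rdiv. apply Rmult_le_pos. nra. left; apply Rinv_0_lt_compat. nra.
Qed.

Fixpoint shell (m j : nat) : list Z :=
  match j with
  | O => []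
  | S i => Z.of_nat (m + S i) :: (- Z.of_nat (m + S i))%Z :: shell m i
  end.

Lemma In_shell m j k : In k (shell m j) <-> (Z.of_nat m < Z.abs k <= Z.of_nat (m + j))%Z.
Proof.
  induction j as [|j IH]; cbn [shell In].
  - split. intros []. lia.
  - rewrite IH. lia.
Qed.

Lemma NoDup_shell m j : NoDup (shell m j).
Proof.
  induction j as [|j IH]; cbn [shell]. constructor.
  constructor. intros [H|H]. lia. apply In_shell in H. lia.
  constructor. intro H. apply In_shell in H. lia. exact IH.
Qed.

Lemma sum_tele_shell m j : (1 <= m)%nat -> sumR tele (shell m j) = 2 * (1 / INR m - 1 / INR (m + j)).
Proof.
  intro Hm. assert (HM : 1 <= INR m) by (apply (le_INR 1); lia).
  induction j as [|j IH]; cbn [shell sumR fold_right].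
  - rewrite Nat.add_0_r. ring.
  - fold (sumR tele (shell m j)). rewrite IH.
    assert (E1 : IZR (Z.abs (Z.of_nat (m + S j))) = INR (m + j) + 1).
    { rewrite Z.abs_eq by lia. rewrite <- INR_IZR_INZ, Nat.add_succ_r, S_INR. reflexivity. }
    assert (E2 : IZR (Z.abs (- Z.of_nat (m + S j))) = INR (m + j) + 1) by (rewrite Z.abs_opp; exact E1).
    unfold tele. rewrite E1, E2, Nat.add_succ_r, S_INR.
    assert (1 <= INR (m + j)) by (apply (le_INR 1); lia).
    field. lra.
Qed.

Lemma abs_bound (l : list Z) : exists J : nat, forall k, In k l -> (Z.abs k <= Z.of_nat J)%Z.
Proof.
  induction l as [|x l [J HJ]]; [exists O; intros k []|].
  exists (Z.to_nat (Z.abs x) + J)%nat. intros k [<-|Hk]; [lia|specialize (HJ k Hk); lia].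
Qed.

Lemma tail_sqsum D m : (1 <= m)%nat -> NoDup D -> (forall k, In k D -> (Z.of_nat m < Z.abs k)%Z) ->
  sqsum D coef <= 2 / INR m.
Proof.
  intros Hm ND HD. destruct (abs_bound D) as [J HJ]. unfold sqsum.
  apply Rle_trans with (sumR tele D).
  { apply sumR_le. intros k Hk. apply coef_sq_le_tele. specialize (HD k Hk). lia. }
  apply Rle_trans with (sumR tele (shell m J)).
  { apply sumR_incl; auto. apply NoDup_shell.
    - intros k Hk. apply In_shell. specialize (HD k Hk). specialize (HJ k Hk). lia.
    - intros k Hk. apply In_shell in Hk. apply coef_sq_le_tele. lia. }
  rewrite sum_tele_shell by exact Hm.
  assert (1 <= INR (m + J)) by (apply (le_INR 1); lia).
  assert (0 < 1 / INR (m + J)) by (unfold Rdiv; rewrite Rmult_1_l; apply Rinv_0_lt_compat; lra).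
  unfold Rdiv in *. lra.
Qed.

(** For even [y = 2l >= 4],
    [y^2/(y^2-1)^2 <= (16/15)/(y^2-1) = (8/15) (1/(y-1) - 1/(y+1))], so the sum
    over [evens n] telescopes to at most [(8/pi^2)(4/9 + 8/45) = (8/pi^2)(28/45)],
    which is [<= 1 - 4/pi^2] because [pi^2 > 9 > 404/45]. *)
Lemma coef_sq_le_step k : 4 <= IZR k ->
  coef k * coef k <= 4 / (PI * PI) * (8 / 15 * (1 / (IZR k - 1) - 1 / (IZR k + 1))).
Proof.
  intro Hy. pose proof PI_gt3. rewrite coef_sq. set (y := IZR k) in *.
  apply Rmult_le_compat_l; [apply Rlt_le, Rdiv_lt_0_compat; nra|].
  replace (8 / 15 * (1 / (y - 1) - 1 / (y + 1))) with (16 / 15 / (y * y - 1))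
    by (field; repeat split; apply Rgt_not_eq; nra).
  assert (15 <= y * y - 1) by nra.
  apply div_le; [nra|lra|].
  assert (0 <= (y * y - 1) * (y * y - 16)) by (apply Rmult_le_pos; nra). nra.
Qed.

(** Closed-form bound by induction: the pair [+-2] contributes exactly
    [(8/pi^2)(4/9)], each later pair [+-(2n+4)] at most
    [(8/pi^2)(8/15)(1/(2n+3) - 1/(2n+5))]. *)
Lemma evens_sqsum_closed n :
  sqsum (evens (S n)) coef <= 8 / (PI * PI) * (28 / 45 - 8 / 15 / (2 * INR n + 3)).
Proof.
  pose proof PI_gt3.
  induction n as [|n IH].
  - unfold sqsum. cbn [evens sumR fold_right]. rewrite coef_opp, Rmult_opp_opp, coef_sq. simpl.
    right. field. lra.
  - pose proof (pos_INR n).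
    assert (Ey : IZR (2 * Z.of_nat (S (S n))) = 2 * INR n + 4)
      by (rewrite mult_IZR, <- INR_IZR_INZ, !S_INR; ring).
    assert (Hs := coef_sq_le_step (2 * Z.of_nat (S (S n))) ltac:(rewrite Ey; lra)).
    rewrite Ey in Hs.
    replace (2 * INR n + 4 - 1) with (2 * INR n + 3) in Hs by ring.
    replace (2 * INR n + 4 + 1) with (2 * INR (S n) + 3) in Hs by (rewrite S_INR; ring).
    change (sqsum (evens (S (S n))) coef) with
      (coef (2 * Z.of_nat (S (S n))) * coef (2 * Z.of_nat (S (S n))) +
       (coef (- (2 * Z.of_nat (S (S n)))) * coef (- (2 * Z.of_nat (S (S n)))) +
        sqsum (evens (S n)) coef)).
    rewrite coef_opp, Rmult_opp_opp. clear Ey.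
    set (c := coef _ * coef _) in *. set (P := sqsum (evens (S n)) coef) in *.
    unfold Rdiv in *. rewrite !Rmult_1_l in Hs.
    set (K := / (PI * PI)) in *. set (u := / (2 * INR n + 3)) in *.
    set (v := / (2 * INR (S n) + 3)) in *.
    clearbody c P K u v.
    apply Rle_trans with (2 * (4 * K * (8 * / 15 * (u - v))) + 8 * K * (28 * / 45 - 8 * / 15 * u));
      [lra|right; field].
Qed.

(** Letting the telescoping tail vanish: the bound [1 - 4/pi^2] of the theorem. *)
Lemma evens_sqsum n : sqsum (evens n) coef <= 1 - 4 / PI ^ 2.
Proof.
  pose proof PI_gt3.
  assert (HPI : 404 / 45 <= PI * PI) by nra.
  destruct n as [|n].
  - replace (PI ^ 2) with (PI * PI) by ring.
    assert (4 / (PI * PI) <= 1 / 1) by (apply div_le; nra).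
    unfold sqsum; simpl. lra.
  - eapply Rle_trans. apply evens_sqsum_closed.
    assert (0 < 8 / 15 / (2 * INR n + 3)) by (pose proof (pos_INR n); apply Rdiv_lt_0_compat; lra).
    assert (0 < 8 / (PI * PI)) by (apply Rdiv_lt_0_compat; nra).
    replace (1 - 4 / PI ^ 2) with (8 / (PI * PI) * (28 / 45) + (PI * PI - 404 / 45) / (PI * PI))
      by (field; lra).
    assert (0 <= (PI * PI - 404 / 45) / (PI * PI))
      by (apply Rmult_le_pos; [lra|left; apply Rinv_0_lt_compat; nra]).
    nra.
Qed.

Definition tail_bound (N : nat) : R := 2 * sqrt (/ INR N).

Lemma tail_bound_small eps : 0 < eps -> exists N, (1 <= N)%nat /\ tail_bound N < eps.
Proof.
  intro He. destruct (archimed_cor1 (eps * eps / 4)) as [N [HN1 HN2]]; [nra|].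
  exists N. split; [lia|]. unfold tail_bound.
  assert (HN : 0 < INR N) by (apply lt_0_INR; lia).
  pose proof (sqrt_sqrt (/ INR N) (Rlt_le _ _ (Rinv_0_lt_compat _ HN))).
  pose proof (sqrt_pos (/ INR N)).
  destruct (Rlt_or_le (2 * sqrt (/ INR N)) eps) as [L|L]; auto. exfalso. nra.
Qed.

Section Approximants.
Variable A : CStarAlg.
Variable a : Z -> A.
Hypothesis hCAR : CAR_relations A a.

(** [u_n = L (B_(evens n))], the partial sum of [Psi] over [pairs0 n]. *)
Definition approx (n : nat) : A := L0 A a (lincomb A a (evens n) coef).

Lemma approx_bound n : norm (approx n) <= 2 * sqrt (1 - 4 / PI ^ 2).
Proof.
  eapply Rle_trans. apply (norm_L0_lincomb A a hCAR), evens_keyset.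
  apply Rmult_le_compat_l; [lra|]. apply sqrt_le_1_alt, evens_sqsum.
Qed.

(** Tail control: any keyset [K] containing [evens N] satisfies
    [||L B_K - u_N|| = ||L B_(K \ evens N)|| <= 2 sqrt(2/(2N))], since the
    partners in [K \ evens N] all have [|k| > 2N]. *)
Lemma approx_tail K N : (1 <= N)%nat -> keyset K -> incl (evens N) K ->
  norm (sub A (L0 A a (lincomb A a K coef)) (approx N)) <= tail_bound N.
Proof.
  intros HN [NK HK] HEK. destruct (evens_keyset N) as [NE _].
  assert (NKE : NoDup (list_minus K (evens N))) by (apply NoDup_filter, NK).
  unfold approx. rewrite (lincomb_split A a K (evens N) coef NK NE HEK), L0_add, add_sub_cancel.
  eapply Rle_trans. apply (norm_L0_lincomb A a hCAR _ _ NKE).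
  apply Rmult_le_compat_l; [lra|]. apply sqrt_le_1_alt.
  replace (/ INR N) with (2 / INR (2 * N))
    by (rewrite mult_INR; simpl; field; apply not_0_INR; lia).
  apply tail_sqsum; [lia|exact NKE|].
  intros k Hk. apply In_list_minus in Hk. destruct Hk as [Hk Hout]. destruct (HK k Hk) as [Ev Hz].
  assert (~ (Z.abs k <= 2 * Z.of_nat N)%Z) by (intro; apply Hout, In_evens; auto).
  rewrite Nat2Z.inj_mul. simpl Z.of_nat. lia.
Qed.

Lemma approx_cauchy : forall eps, 0 < eps -> exists N, forall p q, (N <= p)%nat -> (N <= q)%nat ->
  norm (add (approx p) (opp (approx q))) < eps.
Proof.
  intros eps He. destruct (tail_bound_small (eps / 2)) as [N [HN HT]]; [lra|].
  exists N. intros p q Hp Hq. fold (sub A (approx p) (approx q)).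
  pose proof (norm_sub_tri A (approx p) (approx N) (approx q)).
  pose proof (approx_tail (evens p) N HN (evens_keyset p) (evens_incl N p Hp)).
  pose proof (approx_tail (evens q) N HN (evens_keyset q) (evens_incl N q Hq)).
  rewrite (norm_sub_sym A (approx N)) in *. unfold approx in *. lra.
Qed.

(** The limit of the approximants is the limit of the net of partial sums:
    a family [F] containing [pairs0 N] has [||sumPsi F - u_N|| <= tail_bound N]. *)
Lemma sumPsi_converges S : seq_limit A approx S -> sum_X_ni_0_converges_to A a S.
Proof.
  intros HS eps He. destruct (tail_bound_small (eps / 3)) as [N [HN HT]]; [lra|].
  exists (pairs0 N). split; [apply admissible_pairs0|]. intros F HF HI.
  destruct (HS (eps / 3)) as [n0 Hn0]; [lra|].
  set (n := Nat.max n0 N). specialize (Hn0 n ltac:(lia)). fold (sub A (approx n) S) in Hn0.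
  assert (HF0 : Forall (fun X => In 0%Z X) F)
    by (eapply Forall_impl; [|exact (proj2 HF)]; simpl; tauto).
  rewrite (sumPsi_keys A a F HF0). fold (sub A (L0 A a (lincomb A a (keys F) coef)) S).
  assert (HFN : norm (sub A (L0 A a (lincomb A a (keys F) coef)) (approx N)) <= tail_bound N).
  { apply approx_tail; [exact HN|apply keys_keyset, HF|].
    rewrite <- keys_pairs0. apply keys_incl, HI. }
  assert (HNn : norm (sub A (approx N) (approx n)) <= tail_bound N).
  { rewrite norm_sub_sym. apply approx_tail; [exact HN|apply evens_keyset|apply evens_incl; lia]. }
  pose proof (norm_sub_tri A (L0 A a (lincomb A a (keys F) coef)) (approx N) S).
  pose proof (norm_sub_tri A (approx N) (approx n) S).
  lra.
Qed.

End Approximants.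

Theorem mainTheorem8 (A : CStarAlg) (a : Z -> A) (hCAR : CAR_relations A a) :
  exists S : A, sum_X_ni_0_converges_to A a S /\
    norm S <= 2 * sqrt (1 - 4 / PI ^ 2).
Proof.
  destruct (complete A (approx A a) (approx_cauchy A a hCAR)) as [S HS].
  exists S. split.
  - exact (sumPsi_converges A a hCAR S HS).
  - exact (norm_limit_le A (approx A a) S _ HS (approx_bound A a hCAR)).
Qed.
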